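(* Let $m,k,\Delta \in \mathbb{Z}_{>0}$ with $m > k$. (i) If no Sauer Matrix of size $k$ is feasible for translations, then \[ h_s(m) \le 2\sum_{i=0}^{k-1}\binom{m}{i} \in \mathcal{O}(m^{k-1}). \] (ii) If no Sauer Matrix $S$ of size $k$ admits a translation vector $t \in [0,1)^k \cap (\tfrac1\Delta\mathbb{Z})^k\setminus\{\mathbf 0\}$ such that $t+S$ is totally $1$-submodular, then \[ h_s^{\Delta}(m) \le 2\sum_{i=0}^{k-1}\binom{m}{i} \in \mathcal{O}(m^{k-1}). \]
   Context: A real matrix is totally $1$-submodular if every square submatrix (of every size) has determinant of absolute value at most $1$. For $t\in\mathbb{R}^m$ and a matrix $A$ with columns $A_1,\dots,A_n$, $t+A$ is the matrix with columns $t+A_i$. The shifted Heller constant $h_s(m)$ is the maximum $n$ such that there exist $t \in [0,1)^m\setminus\{\mathbf 0\}$ and $A \in \{-1,0,1\}^{m\times n}$ with pairwise distinct columns such that $t+A$ is totally $1$-submodular; for an integer $\delta\ge2$, $h_s^\delta(m)$ is defined the same way but with $t \in [0,1)^m\cap(\tfrac1\delta\mathbb{Z})^m\setminus\{\mathbf 0\}$ (in (ii) the quantity $h_s^{\Delta}(m)$ is thus meant for $\Delta\ge 2$). A Sauer Matrix of size $k$ is a matrix $S\in\{-1,0,1\}^{k\times 2^k}$ whose columns have pairwise distinct supports, so that every subset of $[k]$ is the support (set of nonzero coordinates) of exactly one column, the nonzero entries being arbitrary elements of $\{-1,1\}$. A vector $r\in[0,1)^k$ is feasible for $S$ if $r+S$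 is totally $1$-submodular; $S$ is feasible for translations if some $r\in[0,1)^k$ is feasible for $S$. *)

From HB Require Import structures.
From mathcomp Require Import all_boot all_order all_algebra.
From mathcomp Require Import reals.
Set Implicit Arguments. Unset Strict Implicit. Unset Printing Implicit Defensive.
Import Order.TTheory GRing.Theory Num.Theory.
Local Open Scope ring_scope.

Definition tot1sub (R : realType) (m n : nat) (M : 'M[R]_(m, n)) : Prop :=
  forall (p : nat) (f : 'I_p -> 'I_m) (g : 'I_p -> 'I_n),
    injective f -> injective g -> `|\det (mxsub f g M)| <= 1.

Definition translate (R : realType) (m n : nat) (t : 'cV[R]_m) (A : 'M[R]_(m, n))
  : 'M[R]_(m, n) := \matrix_(i, j) (t i 0 + A i j).

Definition ternary (R : realType) (m n : nat) (A : 'M[R]_(m, n)) : Prop :=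
  forall i j, A i j \in [:: -1; 0; 1].

Definition in_unit_cube (R : realType) (m : nat) (t : 'cV[R]_m) : Prop :=
  forall i, 0 <= t i 0 < 1.

Definition in_grid (R : realType) (m Delta : nat) (t : 'cV[R]_m) : Prop :=
  forall i, exists z : int, t i 0 = z%:~R / Delta%:R.

(* n is attained in the definition of h_s(m): there are t in [0,1)^m \ {0}
   and A in {-1,0,1}^{m x n} with pairwise distinct columns and t+A totally
   1-submodular.  h_s(m) is the maximum such n. *)
Definition shifted_heller_witness (R : realType) (m n : nat) : Prop :=
  exists (t : 'cV[R]_m) (A : 'M[R]_(m, n)),
    [/\ in_unit_cube t, t != 0, ternary A, injective (fun j => col j A)
      & tot1sub (translate t A)].

(* same for h_s^Delta(m): additionally t in (1/Delta Z)^m. *)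
Definition shifted_heller_delta_witness (R : realType) (m Delta n : nat) : Prop :=
  exists (t : 'cV[R]_m) (A : 'M[R]_(m, n)),
    [/\ in_unit_cube t /\ in_grid Delta t, t != 0, ternary A,
        injective (fun j => col j A) & tot1sub (translate t A)].

Definition col_support (R : realType) (k n : nat) (S : 'M[R]_(k, n)) (j : 'I_n)
  : {set 'I_k} := [set i | S i j != 0].

Definition sauer_matrix (R : realType) (k : nat) (S : 'M[R]_(k, 2 ^ k)) : Prop :=
  ternary S /\ forall X : {set 'I_k}, exists! j : 'I_(2 ^ k), col_support S j = X.

Definition feasible_vec (R : realType) (k : nat) (S : 'M[R]_(k, 2 ^ k)) (r : 'cV[R]_k)
  : Prop := in_unit_cube r /\ tot1sub (translate r S).

Definition feasible_for_translations (R : realType) (k : nat) (S : 'M[R]_(k, 2 ^ k))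
  : Prop := exists r : 'cV[R]_k, feasible_vec S r.

Definition heller_bound (m k : nat) : nat := (2 * \sum_(i < k) 'C(m, i))%N.

From HB Require Import structures.
From mathcomp Require Import all_boot all_order all_algebra.
From mathcomp Require Import reals.
From mathcomp Require Import ring lra zify.
Import Order.TTheory GRing.Theory Num.Theory.
Set Implicit Arguments. Unset Strict Implicit. Unset Printing Implicit Defensive.

(* If t + A is totally 1-submodular with t in [0,1)^m, then at most two
   columns of A share a support: on rows with t_i > 0 the entries lie in
   {-1, 0}, and on rows with t_i = 0 the 2x2 minors make two columns with the
   same support agree up to a global sign.  So more than 2 sum_{i<k} C(m,i)
   columns have more than sum_{i<k} C(m,i) supports, and by the Sauer-Shelah
   lemma they shatter a k-set of rows; the corresponding submatrix of A is a
   Sauer matrix of size k, feasible for the restriction of t.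
   In the grid version this restriction must moreover be nonzero.  Otherwise
   the Sauer matrix itself would be totally 1-submodular, which a signed odd
   cycle on three rows rules out for k >= 3; for k <= 2 the hypothesis never
   holds, as an explicit Sauer matrix admits the translation (1/Delta, 0). *)

Section Shattering.
Variable T : finType.
Implicit Types (F : {set {set T}}) (S X Y : {set T}) (x : T).

Definition shatters F S : bool :=
  [forall Y : {set T}, (Y \subset S) ==> [exists X in F, X :&: S == Y]].

Definition shattered F : {set {set T}} := [set S | shatters F S].

Lemma shattersP F S :
  reflect (forall Y, Y \subset S -> exists2 X, X \in F & X :&: S = Y) (shatters F S).
Proof.
apply: (iffP forallP) => [shS Y YS|shS Y].
  by have /implyP/(_ YS)/existsP[X /andP[XF /eqP <-]] := shS Y; exists X.
by apply/implyP => /shS[X XF <-]; apply/existsP; exists X; rewrite XF eqxx.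
Qed.

Lemma shatters_subset F S S' : shatters F S -> S' \subset S -> shatters F S'.
Proof.
move=> /shattersP shS S'S; apply/shattersP => Y YS'.
have [X XF XSY] := shS Y (subset_trans YS' S'S).
exists X => //; apply/setP => z; move/setP/(_ z): XSY; rewrite !inE => XSYz.
apply/andP/idP => [[zX zS']|zY]; first by rewrite -XSYz zX (subsetP S'S).
by move: (zY); rewrite -XSYz (subsetP YS') // => /andP[].
Qed.

Lemma set0_shattered F : F != set0 -> set0 \in shattered F.
Proof.
case/set0Pn=> X XF; rewrite inE; apply/shattersP => Y.
by rewrite subset0 => /eqP->; exists X; rewrite ?setI0.
Qed.

Lemma shatters_notin F S x :
  {in F, forall X, x \notin X} -> shatters F S -> x \notin S.
Proof.
move=> Fx /shattersP/(_ S (subxx S))[X XF XS]; apply: contra (Fx X XF).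
by rewrite -{1}XS inE => /andP[].
Qed.

Definition delete_point F x := [set X :\ x | X in F].

Definition twin_sets F x := [set X in F | (x \notin X) && (x |: X \in F)].

(* Deleting [x] identifies exactly the twin pairs [X], [x |: X] of [F]. *)
Lemma card_delete_point F x : #|F| = #|delete_point F x| + #|twin_sets F x|.
Proof.
pose P := [set X : {set T} | x \in X]; pose F0 := F :\: P; pose F1 := F :&: P.
have F0id : [set X :\ x | X in F0] = F0.
  rewrite -[RHS]imset_id; apply: eq_in_imset => X; rewrite !inE => /andP[xX _].
  by apply/setDidPl; rewrite disjoint_sym disjoints1.
have inj1 : {in F1 &, injective (fun X => X :\ x)}.
  move=> X Y; rewrite !inE => /andP[_ xX] /andP[_ xY] XYx.
  by rewrite -(setD1K xX) -(setD1K xY) XYx.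
have -> : delete_point F x = F0 :|: [set X :\ x | X in F1].
  by rewrite /delete_point -{1}(setID F P) imsetU F0id setUC.
have -> : twin_sets F x = F0 :&: [set X :\ x | X in F1].
  apply/setP => X; rewrite /F0 /F1 !inE; apply/andP/andP => [[XF /andP[xX xXF]]|[]].
    split; first by rewrite xX XF.
    by apply/imsetP; exists (x |: X); rewrite ?setU1K // !inE eqxx xXF.
  move=> /andP[xX XF] /imsetP[Y]; rewrite !inE => /andP[YF xY] XE.
  by rewrite XF xX XE setD1K.
by rewrite cardsUI card_in_imset // addnC cardsID.
Qed.

Lemma shatters_delete_point F x S : shatters (delete_point F x) S -> shatters F S.
Proof.
move=> shS; have xS : x \notin S.
  by apply: shatters_notin shS => _ /imsetP[X _ ->]; rewrite !inE eqxx.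
apply/shattersP => Y /(shattersP _ _ shS)[_ /imsetP[X XF ->] <-].
exists X => //; apply/setP => z; rewrite !inE.
by case: eqVneq => // ->; rewrite (negbTE xS) andbF.
Qed.

Lemma shatters_twin_sets F x S : shatters (twin_sets F x) S -> shatters F (x |: S).
Proof.
move=> shS; have xS : x \notin S.
  by apply: shatters_notin shS => X; rewrite inE => /and3P[].
apply/shattersP => Y YxS.
have /(shattersP _ _ shS)[X] : Y :\ x \subset S by rewrite subDset.
rewrite inE => /and3P[XF xX xXF] XSY.
have [xY|xY] := boolP (x \in Y).
  by exists (x |: X) => //; rewrite -setUIr XSY setD1K.
exists X => //; apply/setP => z; move/setP/(_ z): XSY; rewrite !inE.
by case: eqVneq => [->|_ //]; rewrite (negbTE xX) (negbTE xY).
Qed.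

Lemma card_shattered_split F x :
  #|shattered (delete_point F x)| + #|shattered (twin_sets F x)| <= #|shattered F|.
Proof.
set S1 := shattered _; set S2 := shattered _.
have S1x S : S \in S1 -> x \notin S.
  by rewrite inE; apply: shatters_notin => _ /imsetP[X _ ->]; rewrite !inE eqxx.
have S2x S : S \in S2 -> x \notin S.
  by rewrite inE; apply: shatters_notin => X; rewrite inE => /and3P[].
have inj2 : {in S2 &, injective (fun S => x |: S)}.
  by move=> S S' /S2x xS /S2x xS' eqS; rewrite -(setU1K xS) -(setU1K xS') eqS.
rewrite -(card_in_imset inj2) -cardsUI.
have -> : S1 :&: [set x |: S | S in S2] = set0.
  apply/setP => S; rewrite in_setI in_set0; apply/andP => -[/S1x xS /imsetP[S' _ eqS]].
  by move: xS; rewrite eqS setU11.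
rewrite cards0 addn0; apply: subset_leq_card; apply/subsetP => S.
rewrite !inE => /orP[/shatters_delete_point //|/imsetP[S' + ->]].
by rewrite inE => /shatters_twin_sets.
Qed.

Lemma card_le_shattered_small F : #|F| <= 1 -> #|F| <= #|shattered F|.
Proof.
move=> F1; have [->|F0] := eqVneq F set0; first by rewrite cards0.
by apply: leq_trans F1 _; rewrite card_gt0; apply/set0Pn; exists set0; apply: set0_shattered.
Qed.

(* Pajor's form of the Sauer--Shelah lemma. *)
Lemma card_le_shattered F : #|F| <= #|shattered F|.
Proof.
suff: forall n (D : {set T}) (F : {set {set T}}),
    #|D| = n -> {in F, forall X, X \subset D} -> #|F| <= #|shattered F|.
  by apply=> // X _; apply: subsetT.
elim=> [|n IH] D {}F cardD FD.
  have D0 : D = set0 by apply/eqP; rewrite -cards_eq0 cardD.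
  apply: card_le_shattered_small; rewrite -(cards1 (@set0 T)).
  by apply/subset_leq_card/subsetP => X /FD; rewrite D0 subset0 inE.
have [x xD] : exists x, x \in D by apply/set0Pn; rewrite -card_gt0 cardD.
have cardDx : #|D :\ x| = n by move: cardD; rewrite (cardsD1 x) xD => -[].
rewrite (card_delete_point F x); apply: leq_trans (card_shattered_split F x).
apply: leq_add; apply: (IH (D :\ x)) => // X.
  by case/imsetP=> Y /FD YD ->; apply: setSD.
by rewrite inE subsetD1 => /and3P[/FD -> ->].
Qed.

Lemma card_small_sets k : #|[set S : {set T} | #|S| < k]| = \sum_(i < k) 'C(#|T|, i).
Proof.
elim: k => [|k IH].
  by rewrite big_ord0; apply/eqP; rewrite cards_eq0 -subset0; apply/subsetP => S; rewrite inE.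
rewrite big_ord_recr /= -IH -card_draws.
rewrite -(cardsID [set S : {set T} | #|S| == k] [set S : {set T} | #|S| < k.+1]) addnC.
congr (_ + _); apply: eq_card => S; rewrite !inE ltnS leq_eqVlt.
  by case: eqP => [->|]; rewrite ?ltnn.
by case: eqP => [->|]; rewrite ?eqxx ?andbF.
Qed.

Lemma sauer_shelah k F :
  \sum_(i < k) 'C(#|T|, i) < #|F| -> exists2 S, shatters F S & #|S| = k.
Proof.
move=> ltF; have: ~~ (shattered F \subset [set S : {set T} | #|S| < k]).
  apply: contraL ltF => /subset_leq_card; rewrite card_small_sets -leqNgt.
  exact: leq_trans (card_le_shattered F).
case/subsetPn=> S; rewrite !inE -leqNgt => shS /card_geqP[s [s_uniq s_size sS]].
exists [set z in s]; last by rewrite cardsE (card_uniqP s_uniq).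
by apply: (shatters_subset shS); apply/subsetP => z; rewrite inE => /sS.
Qed.
End Shattering.

Local Open Scope ring_scope.

Section TernaryArith.
Variable R : realDomainType.
Implicit Types a b c d x y z : R.

Notation tern x := (x \in [:: -1; 0; 1]).

Lemma ternary_sqr x : tern x -> x != 0 -> x ^+ 2 = 1.
Proof. by rewrite !inE => /or3P[]/eqP->; rewrite ?eqxx // => _; rewrite ?sqrrN expr1n. Qed.

Lemma ternary_minor_eq a b c d : tern a -> tern b -> tern c -> tern d ->
  (a == 0) = (c == 0) -> (b == 0) = (d == 0) -> `|a * b - c * d| <= 1 -> a * b = c * d.
Proof.
rewrite !inE => /or3P[]/eqP-> /or3P[]/eqP-> /or3P[]/eqP-> /or3P[]/eqP->;
  rewrite ?eqxx ?oppr_eq0 ?oner_eq0 //= => _ _; rewrite ler_norml => /andP[]; lra.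
Qed.

Lemma ternary_eq_of_neq1 a b : tern a -> tern b -> a != 1 -> b != 1 ->
  (a == 0) = (b == 0) -> a = b.
Proof.
by rewrite !inE => /or3P[]/eqP-> /or3P[]/eqP->; rewrite ?eqxx ?oppr_eq0 ?oner_eq0.
Qed.

Lemma ternary_pigeonhole x y z : tern x -> tern y -> tern z ->
  x != 0 -> y != 0 -> z != 0 -> [\/ x = y, x = z | y = z].
Proof.
rewrite !inE => /or3P[]/eqP-> /or3P[]/eqP-> /or3P[]/eqP->;
  rewrite ?eqxx ?oppr_eq0 ?oner_eq0 //= => _ _ _;
  by [apply: Or31 | apply: Or32 | apply: Or33].
Qed.

Lemma odd_cycle_det_gt1 x x' y y' z z' p q r :
  x ^+ 2 = 1 -> y ^+ 2 = 1 -> z ^+ 2 = 1 -> p ^+ 2 = 1 -> q ^+ 2 = 1 -> r ^+ 2 = 1 ->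
  x * q = p * x' -> y * r = q * y' -> z' * r = p * z ->
  1 < `|x * y * z + x' * y' * z'|.
Proof.
move=> x2 y2 z2 p2 q2 r2 exq eyr ezr.
have -> : x' = p * x * q by rewrite -mulrA exq mulrA -expr2 p2 mul1r.
have -> : y' = q * y * r by rewrite -mulrA eyr mulrA -expr2 q2 mul1r.
have -> : z' = p * z * r by rewrite -ezr -mulrA -expr2 r2 mulr1.
have w2 : (x * y * z) ^+ 2 = 1 by rewrite !exprMn x2 y2 z2 !mul1r.
have -> : x * y * z + p * x * q * (q * y * r) * (p * z * r) =
          x * y * z * (1 + p ^+ 2 * q ^+ 2 * r ^+ 2) by ring.
rewrite p2 q2 r2 !mul1r ltr_normr.
by move/eqP: w2; rewrite sqrf_eq1 => /orP[]/eqP->; apply/orP; [left|right]; lra.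
Qed.
End TernaryArith.

Lemma det_mx22 (R : comPzRingType) (M : 'M[R]_2) :
  \det M = M 0 0 * M 1 1 - M 0 1 * M 1 0.
Proof.
rewrite (expand_det_row _ 0) !big_ord_recl big_ord0 /cofactor !det_mx11 !mxE /=.
have -> : lift 0 0 = 1 :> 'I_2 by apply/val_inj.
have -> : lift 1 0 = 0 :> 'I_2 by apply/val_inj.
by rewrite expr0 expr1 !mul1r mulN1r addr0 mulrN.
Qed.

Lemma det_mx33 (R : comPzRingType) (M : 'M[R]_3) :
  \det M = M 0 0 * (M 1 1 * M 2 2 - M 1 2 * M 2 1)
         - M 0 1 * (M 1 0 * M 2 2 - M 1 2 * M 2 0)
         + M 0 2 * (M 1 0 * M 2 1 - M 1 1 * M 2 0).
Proof.
rewrite (expand_det_row _ 0) !big_ord_recl big_ord0 /cofactor !det_mx22 !mxE.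
have -> : lift ord0 (lift ord0 ord0) = 2 :> 'I_3 by apply/val_inj.
have -> : lift 0 0 = 1 :> 'I_3 by apply/val_inj.
have -> : lift 0 1 = 2 :> 'I_3 by apply/val_inj.
have -> : lift 1 0 = 0 :> 'I_3 by apply/val_inj.
have -> : lift 1 1 = 2 :> 'I_3 by apply/val_inj.
have -> : lift 2 0 = 0 :> 'I_3 by apply/val_inj.
have -> : lift 2 1 = 1 :> 'I_3 by apply/val_inj.
have -> : ord0 = 0 :> 'I_3 by [].
rewrite /= expr0 expr1 expr2 addr0.
ring.
Qed.

Section TotallySubmodular.
Variable R : realType.

Lemma tot1sub_mxsub m n p q (M : 'M[R]_(m, n)) (f : 'I_p -> 'I_m) (g : 'I_q -> 'I_n) :
  injective f -> injective g -> tot1sub M -> tot1sub (mxsub f g M).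
Proof.
move=> f_inj g_inj M1 r f' g' f'_inj g'_inj; rewrite -mxsub_comp.
by apply: M1; apply: inj_comp.
Qed.

Lemma translate_mxsub m n p q (t : 'cV[R]_m) (A : 'M[R]_(m, n))
    (f : 'I_p -> 'I_m) (g : 'I_q -> 'I_n) :
  translate (rowsub f t) (mxsub f g A) = mxsub f g (translate t A).
Proof. by apply/matrixP => i j; rewrite !mxE. Qed.

Lemma translate0 m n (A : 'M[R]_(m, n)) : translate 0 A = A.
Proof. by apply/matrixP => i j; rewrite !mxE add0r. Qed.

Lemma tot1sub_entry m n (M : 'M[R]_(m, n)) i j : tot1sub M -> `|M i j| <= 1.
Proof.
move=> M1; have := M1 1%N (fun=> i) (fun=> j).
by rewrite det_mx11 mxE; apply; move=> a b _; rewrite !ord1.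
Qed.

Lemma tot1sub_minor2 m n (M : 'M[R]_(m, n)) i0 i1 j0 j1 : tot1sub M ->
  i0 != i1 -> j0 != j1 -> `|M i0 j0 * M i1 j1 - M i0 j1 * M i1 j0| <= 1.
Proof.
move=> M1 i01 j01; have := M1 2%N (tnth [tuple i0; i1]) (tnth [tuple j0; j1]).
by rewrite det_mx22 !mxE; apply; apply/tuple_uniqP; rewrite /= inE andbT.
Qed.

Lemma tot1sub_minor3 m n (M : 'M[R]_(m, n)) i0 i1 i2 j0 j1 j2 : tot1sub M ->
  uniq [:: i0; i1; i2] -> uniq [:: j0; j1; j2] ->
  `|M i0 j0 * (M i1 j1 * M i2 j2 - M i1 j2 * M i2 j1)
    - M i0 j1 * (M i1 j0 * M i2 j2 - M i1 j2 * M i2 j0)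
    + M i0 j2 * (M i1 j0 * M i2 j1 - M i1 j1 * M i2 j0)| <= 1.
Proof.
move=> M1 is_uniq js_uniq.
have := M1 3%N (tnth [tuple i0; i1; i2]) (tnth [tuple j0; j1; j2]).
by rewrite det_mx33 !mxE; apply; apply/tuple_uniqP.
Qed.

Lemma tot1sub_of_le2rows m n (M : 'M[R]_(m, n)) : (m <= 2)%N ->
  (forall i j, `|M i j| <= 1) ->
  (forall i0 i1 j0 j1, `|M i0 j0 * M i1 j1 - M i0 j1 * M i1 j0| <= 1) ->
  tot1sub M.
Proof.
move=> m2 M1 M2 [|[|[|p]]] f g f_inj _.
- by rewrite det_mx00 normr1.
- by rewrite det_mx11 mxE.
- by rewrite det_mx22 !mxE.
- by have := leq_card f f_inj; rewrite !card_ord => /leq_trans/(_ m2).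
Qed.
End TotallySubmodular.

Lemma col_support_eq0 (R : realType) m n (A : 'M[R]_(m, n)) c d l :
  col_support A c = col_support A d -> (A l c == 0) = (A l d == 0).
Proof. by move/setP/(_ l); rewrite !inE => /negb_inj. Qed.

Section SupportClasses.
Variables (R : realType) (m n : nat) (t : 'cV[R]_m) (A : 'M[R]_(m, n)).
Hypotheses (t_unit : in_unit_cube t) (A_tern : ternary A)
  (A_inj : injective (fun j => col j A)) (tA1 : tot1sub (translate t A)).

Lemma unit_cube_eq0_or_gt0 l : t l 0 = 0 \/ 0 < t l 0.
Proof. by have /andP[+ _] := t_unit l; rewrite le_eqVlt => /orP[/eqP<-|]; [left|right]. Qed.

Lemma entry_neq1_pos_row l c : 0 < t l 0 -> A l c != 1.
Proof.
move=> tl_gt0; apply/eqP => Alc1; have := tot1sub_entry l c tA1.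
by rewrite mxE Alc1 ler_norml => /andP[_]; lra.
Qed.

Lemma same_support_pos_row c d l :
  col_support A c = col_support A d -> 0 < t l 0 -> A l c = A l d.
Proof.
move=> cd tl_gt0; apply: ternary_eq_of_neq1; rewrite ?entry_neq1_pos_row //.
exact: col_support_eq0.
Qed.

Lemma same_support_zero_rows c d i l : col_support A c = col_support A d ->
  t i 0 = 0 -> t l 0 = 0 -> A i c * A l d = A i d * A l c.
Proof.
move=> cd ti0 tl0; have [<-|il] := eqVneq i l; first by rewrite mulrC.
have [<-|c_d] := eqVneq c d; first by rewrite mulrC.
have := tot1sub_minor2 tA1 il c_d; rewrite !mxE ti0 tl0 !add0r => minor.
by apply: ternary_minor_eq; rewrite ?(col_support_eq0 _ cd).
Qed.

Lemma eq_col_of_zero_rows c d : col_support A c = col_support A d ->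
  (forall l, t l 0 = 0 -> A l c = A l d) -> c = d.
Proof.
move=> cd zero_eq; apply: A_inj; apply/matrixP => l j; rewrite !mxE.
by case: (unit_cube_eq0_or_gt0 l) => [/zero_eq|/(same_support_pos_row cd)].
Qed.

(* On the rows where [t] vanishes, two columns with the same support are
   proportional, so one common nonzero entry forces them to coincide. *)
Lemma same_support_eq_col c d i : col_support A c = col_support A d ->
  t i 0 = 0 -> A i c != 0 -> A i c = A i d -> c = d.
Proof.
move=> cd ti0 Aic_nz Aicd; apply: eq_col_of_zero_rows => // l tl0.
by apply: (mulfI Aic_nz); rewrite (same_support_zero_rows cd ti0 tl0) -Aicd.
Qed.

Lemma card_support_class X : (#|[set j | col_support A j == X]| <= 2)%N.
Proof.
rewrite leqNgt; apply/card_gt2P => -[x [y [z [[]]]]].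
rewrite !inE => /eqP xX /eqP yX /eqP zX [/eqP xy /eqP yz /eqP zx].
have xy_supp : col_support A x = col_support A y by rewrite xX yX.
have yz_supp : col_support A y = col_support A z by rewrite yX zX.
have zx_supp : col_support A z = col_support A x by rewrite zX xX.
have [i /andP[/eqP ti0 Aix_nz]|no_row] := pickP (fun i => (t i 0 == 0) && (A i x != 0)).
  have Aiy_nz : A i y != 0 by rewrite -(col_support_eq0 _ xy_supp).
  have Aiz_nz : A i z != 0 by rewrite (col_support_eq0 _ zx_supp).
  case: (ternary_pigeonhole (A_tern i x) (A_tern i y) (A_tern i z) Aix_nz Aiy_nz Aiz_nz).
  - by move/(same_support_eq_col xy_supp ti0 Aix_nz)/xy.
  - by move=> /esym/(same_support_eq_col zx_supp ti0 Aiz_nz)/zx.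
  - by move/(same_support_eq_col yz_supp ti0 Aiy_nz)/yz.
apply: xy; apply: eq_col_of_zero_rows => // l tl0.
have /eqP Alx0 : A l x == 0 by move: (no_row l); rewrite tl0 eqxx => /negbFE.
have /eqP Aly0 : A l y == 0 by rewrite -(col_support_eq0 _ xy_supp) Alx0.
by rewrite Alx0 Aly0.
Qed.

Lemma ncols_le_2_card_supports : (n <= 2 * #|[set col_support A j | j : 'I_n]|)%N.
Proof.
rewrite -{1}(card_ord n) -[#|'I_n|]sum1_card.
rewrite (partition_big (col_support A) (mem [set col_support A j | j : 'I_n])) /=;
  last by move=> j _; apply: imset_f.
rewrite mulnC -sum_nat_const; apply: leq_sum => X _; apply: leq_trans (card_support_class X).
by rewrite sum1_card; apply/subset_leq_card/subsetP => j; rewrite !inE.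
Qed.
End SupportClasses.

Lemma card_finset (T : finType) : #|{: {set T}}| = (2 ^ #|T|)%N.
Proof. by rewrite -cardsT -card_powerset powersetT cardsT. Qed.

Lemma eq_of_binary_digits k j j' : (j < 2 ^ k)%N -> (j' < 2 ^ k)%N ->
  (forall i, (i < k)%N -> odd (j %/ 2 ^ i) = odd (j' %/ 2 ^ i)) -> j = j'.
Proof.
elim: k j j' => [|k IH] j j'; first by rewrite expn0 !ltnS !leqn0 => /eqP-> /eqP->.
rewrite expnS => ltj ltj' digits.
rewrite -[j]odd_double_half -[j']odd_double_half.
have := digits 0%N isT; rewrite expn0 !divn1 => ->; congr (_ + _.*2).
apply: IH; rewrite -?divn2 ?ltn_divLR // 1?mulnC // => i lti.
by rewrite -!divnMA -expnS; apply: digits.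
Qed.

Section SauerMatrices.
Variable R : realType.

Lemma sauer_matrix_of_inj k (S : 'M[R]_(k, 2 ^ k)) :
  ternary S -> injective (col_support S) -> sauer_matrix S.
Proof.
move=> S_tern S_inj; split=> // X.
have le_card : (#|{: {set 'I_k}}| <= #|'I_(2 ^ k)|)%N by rewrite card_finset !card_ord.
have /codomP[j Xj] := inj_card_onto S_inj le_card X.
by exists j; split=> // j' /esym; rewrite Xj => /S_inj.
Qed.

Lemma sauer_matrix_col k (S : 'M[R]_(k, 2 ^ k)) X :
  sauer_matrix S -> exists j, col_support S j = X.
Proof. by case=> _ /(_ X)[j []]; exists j. Qed.

Lemma sauer_submatrix m n k (A : 'M[R]_(m, n)) (I : {set 'I_m}) :
  ternary A -> #|I| = k -> shatters [set col_support A j | j : 'I_n] I ->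
  exists (f : 'I_k -> 'I_m) (g : 'I_(2 ^ k) -> 'I_n),
    [/\ injective f, injective g & sauer_matrix (mxsub f g A)].
Proof.
move=> A_tern cardI /shattersP shI.
pose f (i : 'I_k) : 'I_m := enum_val (cast_ord (esym cardI) i).
have f_inj : injective f by move=> i i' /enum_val_inj/cast_ord_inj.
have cardX : #|{: {set 'I_k}}| = (2 ^ k)%N by rewrite card_finset card_ord.
pose X (j : 'I_(2 ^ k)) : {set 'I_k} := enum_val (cast_ord (esym cardX) j).
have X_inj : injective X by move=> j j' /enum_val_inj/cast_ord_inj.
have traceP j : exists c, col_support A c :&: I == f @: X j.
  have /shI[_ /imsetP[c _ ->] traceI] : f @: X j \subset I.
    by apply/subsetP => _ /imsetP[i _ ->]; apply: enum_valP.
  by exists c; rewrite traceI.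
pose g j := xchoose (traceP j).
have supp_g j : col_support (mxsub f g A) j = X j.
  apply/setP => i; rewrite -[RHS](mem_imset _ _ f_inj) -(eqP (xchooseP (traceP j))).
  by rewrite !inE mxE enum_valP andbT.
have g_inj : injective g.
  move=> j j' gjj'; apply: X_inj; rewrite -!supp_g.
  by apply/setP => i; rewrite !inE !mxE gjj'.
exists f, g; split=> //; apply: sauer_matrix_of_inj.
  by move=> i j; rewrite mxE.
by move=> j j'; rewrite !supp_g => /X_inj.
Qed.

Lemma sauer_submatrix_of_large m n k (t : 'cV[R]_m) (A : 'M[R]_(m, n)) :
  in_unit_cube t -> ternary A -> injective (fun j => col j A) ->
  tot1sub (translate t A) -> (heller_bound m k < n)%N ->
  exists (S : 'M[R]_(k, 2 ^ k)) (f : 'I_k -> 'I_m),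
    sauer_matrix S /\ tot1sub (translate (rowsub f t) S).
Proof.
move=> t_unit A_tern A_inj tA1 large.
have many_supports :
    (\sum_(i < k) 'C(#|'I_m|, i) < #|[set col_support A j | j : 'I_n]|)%N.
  rewrite card_ord -(@ltn_pmul2l 2) //.
  exact: leq_trans large (ncols_le_2_card_supports t_unit A_tern A_inj tA1).
have [I shI cardI] := sauer_shelah many_supports.
have [f [g [f_inj g_inj S_sauer]]] := sauer_submatrix A_tern cardI shI.
exists (mxsub f g A), f; split=> //.
by rewrite translate_mxsub; apply: tot1sub_mxsub.
Qed.

(* Rows [i0, i1, i2] and columns [a, b, c] carry a signed odd cycle; the
   2x2 minors against the full column [d] fix its sign, so that the 3x3
   minor equals [± 2]. *)
Lemma tot1sub_no_odd_cycle m n (M : 'M[R]_(m, n)) i0 i1 i2 a b c d :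
  ternary M -> tot1sub M -> uniq [:: i0; i1; i2] ->
  [&& M i0 a != 0, M i1 a != 0 & M i2 a == 0] ->
  [&& M i0 b == 0, M i1 b != 0 & M i2 b != 0] ->
  [&& M i0 c != 0, M i1 c == 0 & M i2 c != 0] ->
  [&& M i0 d != 0, M i1 d != 0 & M i2 d != 0] -> False.
Proof.
move=> M_tern M1 is_uniq /and3P[a0 a1 /eqP a2] /and3P[/eqP b0 b1 b2].
move=> /and3P[c0 /eqP c1 c2] /and3P[d0 d1 d2].
have [i01 i12 i02] : [/\ i0 != i1, i1 != i2 & i0 != i2].
  by move: is_uniq; rewrite /= !inE negb_or => /and3P[/andP[-> ->] ->].
have neq_col i (j j' : 'I_n) : M i j != 0 -> M i j' = 0 -> j != j'.
  by move=> Mij Mij'; apply: contraNneq Mij => ->; apply/eqP.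
have abc_uniq : uniq [:: a; b; c].
  by rewrite /= !inE negb_or (neq_col i0) // (neq_col i1) // (neq_col i1).
have minor_eq i i' j : i != i' -> j != d -> M i j != 0 -> M i' j != 0 ->
    M i d != 0 -> M i' d != 0 -> M i j * M i' d = M i d * M i' j.
  move=> ii' jd Mij Mi'j Mid Mi'd; apply: ternary_minor_eq;
    rewrite ?(negbTE Mij) ?(negbTE Mi'j) ?(negbTE Mid) ?(negbTE Mi'd) //.
  exact: tot1sub_minor2.
have := tot1sub_minor3 M1 is_uniq abc_uniq; rewrite a2 b0 c1.
have -> : M i0 a * (M i1 b * M i2 c - 0 * M i2 b) - 0 * (M i1 a * M i2 c - 0 * 0)
    + M i0 c * (M i1 a * M i2 b - M i1 b * 0)
    = M i0 a * M i1 b * M i2 c + M i1 a * M i2 b * M i0 c by ring.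
apply/negP; rewrite -ltNge.
apply: (odd_cycle_det_gt1 (p := M i0 d) (q := M i1 d) (r := M i2 d));
  try exact: ternary_sqr.
- by apply: minor_eq; rewrite // eq_sym (neq_col i2).
- by apply: minor_eq; rewrite // eq_sym (neq_col i0).
- by apply: minor_eq; rewrite // eq_sym (neq_col i1).
Qed.

Lemma sauer_not_tot1sub k (S : 'M[R]_(k, 2 ^ k)) :
  (2 < k)%N -> sauer_matrix S -> ~ tot1sub S.
Proof.
move=> k_gt2 S_sauer S1; have [S_tern _] := S_sauer.
have /card_gt2P[i0 [i1 [i2 [_ [i01 i12 i20]]]]] : (2 < #|[set: 'I_k]|)%N.
  by rewrite cardsT card_ord.
have [i10 i21 i02] : [/\ i1 != i0, i2 != i1 & i0 != i2] by split; rewrite eq_sym.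
have neqs := (negbTE i01, negbTE i10, negbTE i12, negbTE i21, negbTE i02, negbTE i20).
have col_with X := sauer_matrix_col X S_sauer.
have [a Sa] := col_with [set i0; i1]; have [b Sb] := col_with [set i1; i2].
have [c Sc] := col_with [set i0; i2]; have [d Sd] := col_with [set i0; i1; i2].
have entry_eq0 j X i : col_support S j = X -> (S i j == 0) = (i \notin X).
  by move<-; rewrite inE negbK.
apply: (tot1sub_no_odd_cycle S_tern S1 (i0 := i0) (i1 := i1) (i2 := i2)
                            (a := a) (b := b) (c := c) (d := d)).
- by rewrite /= !inE negb_or i01 i02 i12.
- by rewrite !(entry_eq0 _ _ _ Sa) !inE ?eqxx ?neqs ?orbT.
- by rewrite !(entry_eq0 _ _ _ Sb) !inE ?eqxx ?neqs ?orbT.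
- by rewrite !(entry_eq0 _ _ _ Sc) !inE ?eqxx ?neqs ?orbT.
- by rewrite !(entry_eq0 _ _ _ Sd) !inE ?eqxx ?neqs ?orbT.
Qed.

(* Column [j] is supported on the binary digits of [j]; the first row is
   nonpositive, so that it can be shifted by a positive amount. *)
Definition sauer_example k : 'M[R]_(k, 2 ^ k) :=
  \matrix_(i, j) if odd (j %/ 2 ^ i) then (if i == 0 :> nat then -1 else 1) else 0.

Lemma sauer_matrix_example k : sauer_matrix (sauer_example k).
Proof.
have supp j : col_support (sauer_example k) j = [set i : 'I_k | odd (j %/ 2 ^ i)].
  apply/setP => i; rewrite !inE mxE.
  by case: odd; rewrite ?eqxx //; case: ifP; rewrite ?oppr_eq0 oner_eq0.
apply: sauer_matrix_of_inj.
  by move=> i j; rewrite mxE; case: odd; [case: ifP => _|]; rewrite !inE eqxx ?orbT.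
move=> j j'; rewrite !supp => /setP digits.
apply/val_inj/(eq_of_binary_digits (ltn_ord j) (ltn_ord j')) => i lti.
by have := digits (Ordinal lti); rewrite !inE.
Qed.

Lemma tot1sub_translate_sauer_example k x : (k <= 2)%N -> 0 <= x <= 1 ->
  tot1sub (translate (\col_i (if i == 0 :> nat then x else 0)) (sauer_example k)).
Proof.
move=> k_le2 /andP[x_ge0 x_le1]; apply: tot1sub_of_le2rows => // [i j|i0 i1 j0 j1].
  by rewrite !mxE; case: (i == 0 :> nat); case: odd; rewrite ler_norml; apply/andP; split; lra.
have [->|i01] := eqVneq i0 i1; first by rewrite [X in X - _]mulrC subrr normr0.
have rows01 : (i0 == 0 :> nat) != (i1 == 0 :> nat).
  apply: contra i01 => /eqP rows01; apply/eqP/ord_inj.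
  by move: (ltn_ord i0) (ltn_ord i1) rows01; lia.
move: rows01; rewrite !mxE; case: (i0 == 0 :> nat); case: (i1 == 0 :> nat) => // _.
all: case: (odd (j0 %/ 2 ^ i0)) (odd (j1 %/ 2 ^ i1)) (odd (j1 %/ 2 ^ i0)) (odd (j0 %/ 2 ^ i1))
  => [] [] [] []; rewrite ler_norml; apply/andP; split; lra.
Qed.

Lemma sauer_example_grid_translation k Delta : (0 < k)%N -> (k <= 2)%N -> (2 <= Delta)%N ->
  exists t : 'cV[R]_k,
    [/\ in_unit_cube t, in_grid Delta t, t != 0 & tot1sub (translate t (sauer_example k))].
Proof.
move=> k_gt0 k_le2 Delta_ge2.
have e_gt0 : 0 < Delta%:R^-1 :> R by rewrite invr_gt0 ltr0n (leq_trans _ Delta_ge2).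
have e_lt1 : Delta%:R^-1 < 1 :> R by rewrite invf_lt1 ?ltr0n ?ltr1n // (leq_trans _ Delta_ge2).
exists (\col_i (if i == 0 :> nat then Delta%:R^-1 else 0)); split.
- by move=> i; rewrite mxE; case: eqP; rewrite ?lexx ?ltr01 // (ltW e_gt0).
- by move=> i; rewrite mxE; case: eqP => _; [exists 1; rewrite mul1r | exists 0; rewrite mul0r].
- apply/negP => /eqP/matrixP/(_ (Ordinal k_gt0) 0); rewrite !mxE /=.
  by move/eqP; rewrite (gt_eqF e_gt0).
- by apply: tot1sub_translate_sauer_example => //; rewrite (ltW e_gt0) (ltW e_lt1).
Qed.
End SauerMatrices.

Lemma grid_unit_cube_Delta_ge2 (R : realType) m Delta (t : 'cV[R]_m) :
  (0 < Delta)%N -> in_unit_cube t -> in_grid Delta t -> t != 0 -> (2 <= Delta)%N.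
Proof.
move=> Delta_gt0 t_unit t_grid; apply: contraNT; rewrite -ltnNge => Delta_lt2.
have Delta1 : Delta = 1%N by lia.
subst Delta.
apply/eqP/matrixP => i j; rewrite (ord1 j) !mxE.
have [z tz] := t_grid i; have /andP[] := t_unit i.
by rewrite tz divr1 ler0z ltrz1 => z_ge0 z_lt1; have -> : z = 0 by lia.
Qed.

Unset Implicit Arguments. Set Strict Implicit. Set Printing Implicit Defensive.

Theorem proposition3p4 (R : realType) (m k Delta : nat) :
  (0 < m)%N -> (0 < k)%N -> (0 < Delta)%N -> (k < m)%N ->
  ((forall S : 'M[R]_(k, 2 ^ k), sauer_matrix S -> ~ feasible_for_translations S) ->
     forall n : nat, shifted_heller_witness R m n -> (n <= heller_bound m k)%N)
  /\
  ((forall S : 'M[R]_(k, 2 ^ k), sauer_matrix S ->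
      ~ (exists t : 'cV[R]_k,
           [/\ in_unit_cube t, in_grid Delta t, t != 0 & tot1sub (translate t S)])) ->
     forall n : nat, shifted_heller_delta_witness R m Delta n -> (n <= heller_bound m k)%N).
Proof.
move=> _ k_gt0 Delta_gt0 _; split.
  move=> no_feasible n [t [A [t_unit _ A_tern A_inj tA1]]].
  rewrite leqNgt; apply/negP => large.
  have [S [f [S_sauer StA1]]] := sauer_submatrix_of_large t_unit A_tern A_inj tA1 large.
  by apply: (no_feasible S S_sauer); exists (rowsub f t); split=> // i; rewrite mxE.
move=> no_translation n [t [A [[t_unit t_grid] t_nz A_tern A_inj tA1]]].
rewrite leqNgt; apply/negP => large.
have Delta_ge2 := grid_unit_cube_Delta_ge2 Delta_gt0 t_unit t_grid t_nz.
have [k_le2|k_gt2] := leqP k 2.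
  have [t' t'_ok] := sauer_example_grid_translation R k_gt0 k_le2 Delta_ge2.
  by apply: (no_translation _ (sauer_matrix_example R k)); exists t'.
have [S [f [S_sauer StA1]]] := sauer_submatrix_of_large t_unit A_tern A_inj tA1 large.
have [r0|r_nz] := eqVneq (rowsub f t) 0.
  by apply: (sauer_not_tot1sub k_gt2 S_sauer); rewrite -(translate0 S) -r0.
apply: (no_translation S S_sauer); exists (rowsub f t).
by split=> // i; rewrite mxE; [apply: t_unit | apply: t_grid].
Qed.
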